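(* For $i=1,\dots,m$ let $k_i$ be a positive integer, $\mu_i>0$, $\alpha_i\neq 0$ a real constant, and $\bar x_i$ a real number. Define $\mathcal U_i(p_i)=1-\alpha_i p_i$ on the interval $P_i=\{p_i\in\mathbb R: \mathcal U_i(p_i)\in(0,1)\}$. For $u\in(0,1)$ let $f_i(u)$ denote the unique positive real root $y$ of $$F_i(y,u)=\sum_{j=0}^{k_i}\frac{1}{\mu_i^{j-1}}\left[\frac{j-uk_i}{j!}\right]y^{j}=0,$$ and, writing $y=f_i(u)$, $\rho=y/\mu_i$, $\pi_0=\left[\sum_{j=0}^{k_i}\rho^j/j!\right]^{-1}$ and $\pi_{k_i}=\pi_0\rho^{k_i}/k_i!$, define the rejection rate $g_i(p_i)=f_i(\mathcal U_i(p_i))\cdot \pi_{k_i}$ for $p_i\in P_i$. Then the optimization problem $$\text{maximize}_{\mathbf p}\ \ \mathcal U(\mathbf p)\quad\text{subject to}\quad g_i(p_i)\le \bar x_i,\ i=1,\dots,m,$$ where $\mathcal U(\mathbf p)=(\mathcal U_1(p_1),\dots,\mathcal U_m(p_m))$ and $\mathbf p=(p_1,\dots,p_m)\in P_1\times\cdots\times P_m$, is a convex optimization problem; that is, the objective is affine (hence concave) in $\mathbf p$ and each constraint function $g_i$ is convex in $p_i$ on $P_i$.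
   Context: Each block-face $i$ is modeled as a multi-server loss queue with $k_i$ servers (parking spaces), per-server service rate $\mu_i$, total arrival rate $y$, and stationary probabilities $\pi_j=\pi_0\rho^j/j!$ ($j=0,\dots,k_i$) of $j$ busy servers, where $\rho=y/\mu_i$. The occupancy is $u=\frac{y}{k_i\mu_i}(1-\pi_{k_i})$; for $u\in(0,1)$ the total arrival rate $y$ producing occupancy $u$ is the unique positive root $f_i(u)$ of $F_i(y,u)=0$. Price $p_i$ determines occupancy through the linear demand model $\mathcal U_i(p_i)=1-\alpha_i p_i$, and $g_i(p_i)$ is the rate at which vehicles are rejected by (find no space at) block-face $i$. *)

From Stdlib Require Import Arith Reals Lra ClassicalEpsilon.
Open Scope R_scope.

Definition Fpoly (k : nat) (mu y u : R) : R :=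
  sum_f_R0 (fun j => / powerRZ mu (Z.of_nat j - 1)
                     * ((INR j - u * INR k) / INR (fact j)) * y ^ j) k.

Definition froot (k : nat) (mu u : R) : R :=
  epsilon (inhabits 0) (fun y => 0 < y /\ Fpoly k mu y u = 0).

Definition Udem (alpha p : R) : R := 1 - alpha * p.

Definition Pdom (alpha p : R) : Prop := 0 < Udem alpha p < 1.

Definition pi0 (k : nat) (rho : R) : R :=
  / sum_f_R0 (fun j => rho ^ j / INR (fact j)) k.
Definition pik (k : nat) (rho : R) : R :=
  pi0 k rho * rho ^ k / INR (fact k).

Definition grej (k : nat) (mu alpha p : R) : R :=
  let y := froot k mu (Udem alpha p) in
  y * pik k (y / mu).

Definition convex_set (D : R -> Prop) : Prop :=
  forall x y t, D x -> D y -> 0 <= t <= 1 -> D (t * x + (1 - t) * y).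

Definition convex_on (D : R -> Prop) (g : R -> R) : Prop :=
  forall x y t, D x -> D y -> 0 <= t <= 1 ->
    g (t * x + (1 - t) * y) <= t * g x + (1 - t) * g y.

From Stdlib Require Import Reals Lra Lia ZArith ClassicalEpsilon.
From Coquelicot Require Import Rcomplements.
Open Scope R_scope.

(* Writing r = y / mu, F(y, u) = mu S (carried k r - u k) with S > 0, and
   g = y B = y - mu k u, where B is Erlang's loss formula and
   carried k r = r (1 - B).  As u is affine in p, g is convex as soon as
   f = mu carried^-1 (k .) is, i.e. as soon as carried k is concave and
   increasing on (0, oo).  Its slope is 1 - B - B D with D = k - carried k r,
   and the derivative of the slope has the sign of k - D (D + 2 + r B); the
   inequality D (D + 2 + r B) >= k follows by induction on k from
   B(k + 1, r) = r B / (k + 1 + r B).  So the slope is nonincreasing, and it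
   stays positive because carried k r -> k as r -> oo. *)

Lemma convex_comb_between lo hi a b t :
  lo < a < hi -> lo < b < hi -> 0 <= t <= 1 -> lo < t * a + (1 - t) * b < hi.
Proof.
  intros Ha Hb Ht. destruct (Rle_dec a b).
  - assert (0 <= t * (b - a)) by (apply Rmult_le_pos; lra).
    assert (0 <= (1 - t) * (b - a)) by (apply Rmult_le_pos; lra). lra.
  - assert (0 <= t * (a - b)) by (apply Rmult_le_pos; lra).
    assert (0 <= (1 - t) * (a - b)) by (apply Rmult_le_pos; lra). lra.
Qed.

Lemma derivable_pt_lim_eq_deriv f x l l' :
  derivable_pt_lim f x l -> l = l' -> derivable_pt_lim f x l'.
Proof. intros H <-. exact H. Qed.

Lemma nonincreasing_of_deriv_nonpos (f f' : R -> R) (a : R) :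
  (forall x, a < x -> derivable_pt_lim f x (f' x)) ->
  (forall x, a < x -> f' x <= 0) ->
  forall x y, a < x <= y -> f y <= f x.
Proof.
  intros Hder Hneg x y Hxy.
  destruct (Rle_lt_or_eq_dec x y (proj2 Hxy)) as [Hlt | <-]; [| lra].
  destruct (MVT_cor2 f f' x y Hlt) as [c [Hc Hcxy]].
  { intros c Hc. apply Hder. lra. }
  pose proof (Hneg c ltac:(lra)). nra.
Qed.

Lemma strictly_increasing_of_deriv_pos (f f' : R -> R) (a : R) :
  (forall x, a < x -> derivable_pt_lim f x (f' x)) ->
  (forall x, a < x -> 0 < f' x) ->
  forall x y, a < x < y -> f x < f y.
Proof.
  intros Hder Hpos x y Hxy.
  destruct (MVT_cor2 f f' x y (proj2 Hxy)) as [c [Hc Hcxy]].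
  { intros c Hc. apply Hder. lra. }
  pose proof (Hpos c ltac:(lra)). nra.
Qed.

Lemma chord_bounds_of_deriv_nonincreasing (f f' : R -> R) (a : R) :
  (forall x, a < x -> derivable_pt_lim f x (f' x)) ->
  (forall x y, a < x <= y -> f' y <= f' x) ->
  forall u v, a < u <= v -> f' v * (v - u) <= f v - f u <= f' u * (v - u).
Proof.
  intros Hder Hmono u v Huv.
  destruct (Rle_lt_or_eq_dec u v (proj2 Huv)) as [Hlt | <-]; [| lra].
  destruct (MVT_cor2 f f' u v Hlt) as [c [Hc Hcuv]].
  { intros c Hc. apply Hder. lra. }
  rewrite Hc.
  pose proof (Hmono c v ltac:(lra)). pose proof (Hmono u c ltac:(lra)).
  split; apply Rmult_le_compat_r; lra.
Qed.

Lemma concave_of_deriv_nonincreasing (f f' : R -> R) (a : R) :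
  (forall x, a < x -> derivable_pt_lim f x (f' x)) ->
  (forall x y, a < x <= y -> f' y <= f' x) ->
  forall x y t, a < x -> a < y -> 0 <= t <= 1 ->
  t * f x + (1 - t) * f y <= f (t * x + (1 - t) * y).
Proof.
  intros Hder Hmono.
  assert (Hord : forall x y t, a < x <= y -> 0 <= t <= 1 ->
                   t * f x + (1 - t) * f y <= f (t * x + (1 - t) * y)).
  { intros x y t Hxy Ht. set (m := t * x + (1 - t) * y).
    assert (Hm : x <= m <= y) by (unfold m; nra).
    pose proof (chord_bounds_of_deriv_nonincreasing f f' a Hder Hmono x m ltac:(lra)).
    pose proof (chord_bounds_of_deriv_nonincreasing f f' a Hder Hmono m y ltac:(lra)).
    (* both chords are compared with the slope f' m *)
    assert (t * (f' m * (m - x)) = (1 - t) * (f' m * (y - m))) by (unfold m; ring).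
    nra. }
  intros x y t Hx Hy Ht. destruct (Rle_dec x y) as [Hxy | Hyx].
  - apply Hord; lra.
  - replace (t * x + (1 - t) * y) with ((1 - t) * y + (1 - (1 - t)) * x) by ring.
    pose proof (Hord y x (1 - t) ltac:(lra) ltac:(lra)). lra.
Qed.

(* For n servers and offered load r = y / mu, erlangB n r is pi_n and
   carried n r = n u. *)
Definition erlang_term (n : nat) (r : R) : R := r ^ n / INR (fact n).
Definition erlang_sum (n : nat) (r : R) : R := sum_f_R0 (fun j => erlang_term j r) n.
Definition erlangB (n : nat) (r : R) : R := erlang_term n r / erlang_sum n r.
Definition carried (n : nat) (r : R) : R := r * (1 - erlangB n r).
Definition idle (n : nat) (r : R) : R := INR n - carried n r.
Definition carried_slope (n : nat) (r : R) : R := 1 - erlangB n r - erlangB n r * idle n r.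

Lemma erlang_sum_succ n r : erlang_sum (S n) r = erlang_sum n r + erlang_term (S n) r.
Proof. reflexivity. Qed.

Lemma erlang_term_succ n r : erlang_term (S n) r = r * erlang_term n r / INR (S n).
Proof.
  unfold erlang_term. rewrite fact_simpl, mult_INR. simpl pow.
  pose proof (INR_fact_lt_0 n). pose proof (lt_0_INR (S n) (Nat.lt_0_succ n)).
  field. lra.
Qed.

Lemma erlang_term_pos n r : 0 < r -> 0 < erlang_term n r.
Proof.
  intros Hr. apply Rdiv_lt_0_compat; [apply pow_lt | apply INR_fact_lt_0]; lra.
Qed.

Lemma erlang_sum_ge1 n r : 0 < r -> 1 <= erlang_sum n r.
Proof.
  intros Hr. induction n as [| n IH].
  - unfold erlang_sum, erlang_term. simpl. lra.
  - rewrite erlang_sum_succ. pose proof (erlang_term_pos (S n) r Hr). lra.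
Qed.

Lemma erlang_term_le_sum n r : 0 < r -> erlang_term n r <= erlang_sum n r.
Proof.
  intros Hr. destruct n as [| n].
  - unfold erlang_sum. simpl. lra.
  - rewrite erlang_sum_succ. pose proof (erlang_sum_ge1 n r Hr). lra.
Qed.

Lemma erlangB_pos n r : 0 < r -> 0 < erlangB n r.
Proof.
  intros Hr. pose proof (erlang_sum_ge1 n r Hr).
  apply Rdiv_lt_0_compat; [apply erlang_term_pos |]; lra.
Qed.

Lemma erlangB_le1 n r : 0 < r -> erlangB n r <= 1.
Proof.
  intros Hr. pose proof (erlang_sum_ge1 n r Hr). pose proof (erlang_term_le_sum n r Hr).
  unfold erlangB. apply (Rdiv_le_1 (erlang_term n r)); lra.
Qed.

Lemma erlangB_0 r : erlangB 0 r = 1.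
Proof. unfold erlangB, erlang_sum, erlang_term. simpl. field. Qed.

Lemma erlangB_succ n r : 0 < r ->
  erlangB (S n) r = r * erlangB n r / (INR (S n) + r * erlangB n r).
Proof.
  intros Hr. unfold erlangB. rewrite erlang_sum_succ, erlang_term_succ.
  pose proof (erlang_sum_ge1 n r Hr). pose proof (erlang_term_pos n r Hr).
  pose proof (lt_0_INR (S n) (Nat.lt_0_succ n)).
  field. repeat split; nra.
Qed.

Lemma idle_0 r : idle 0 r = 0.
Proof. unfold idle, carried. rewrite erlangB_0. simpl. ring. Qed.

Lemma idle_succ n r : 0 < r ->
  idle (S n) r = INR (S n) * (idle n r + 1) / (INR (S n) + r * erlangB n r).
Proof.
  intros Hr. pose proof (erlangB_pos n r Hr). pose proof (lt_0_INR (S n) (Nat.lt_0_succ n)).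
  unfold idle at 1, carried. rewrite erlangB_succ by exact Hr.
  unfold idle, carried. rewrite S_INR in *. field. nra.
Qed.

Lemma idle_nonneg n r : 0 < r -> 0 <= idle n r.
Proof.
  intros Hr. induction n as [| n IH].
  - rewrite idle_0. lra.
  - rewrite idle_succ by exact Hr.
    pose proof (erlangB_pos n r Hr). pose proof (lt_0_INR (S n) (Nat.lt_0_succ n)).
    apply Rdiv_le_0_compat; nra.
Qed.

Lemma idle_pos n r : (0 < n)%nat -> 0 < r -> 0 < idle n r.
Proof.
  intros Hn Hr. destruct n as [| n]; [lia |].
  rewrite idle_succ by exact Hr.
  pose proof (idle_nonneg n r Hr). pose proof (erlangB_pos n r Hr).
  pose proof (lt_0_INR (S n) (Nat.lt_0_succ n)).
  apply Rdiv_lt_0_compat; nra.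
Qed.

Lemma idle_le n r : 0 < r -> idle n r <= INR n.
Proof.
  intros Hr. pose proof (erlangB_le1 n r Hr). unfold idle, carried. nra.
Qed.

Lemma idle_quadratic_step (k d x : R) :
  0 <= d -> 0 < x -> d + 1 <= k -> k <= d * (d + 2 + x) + 1 ->
  (k + x) * (k + x) <= (d + 1) * (k * d + 3 * k + 2 * x + (k - 1 + x - d) * x).
Proof.
  intros Hd Hx Hk HkB.
  destruct (Rle_lt_or_eq_dec 0 d Hd) as [Hd0 | <-]; [| nra].
  (* Multiplied by d * (d + 1 + x) > 0, the claim becomes a sum of nonnegative
     terms, because d + 1 <= k <= d * (d + 2 + x) + 1. *)
  apply Rminus_le, Ropp_le_cancel. rewrite Ropp_0, Ropp_minus_distr.
  apply (Rmult_le_reg_l (d * (d + 1 + x))); [nra |].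
  rewrite Rmult_0_r.
  replace (d * (d + 1 + x) * ((d + 1) * (k * d + 3 * k + 2 * x + (k - 1 + x - d) * x)
                              - (k + x) * (k + x)))
    with (d * (d + 1 + x) * (k - (d + 1)) * (d * (d + 2 + x) + 1 - k)
          + (d * (d + 2 + x) + 1 - k) * (d * d * d + 4 * d * d + 5 * d + 2 + x * x * d)
          + (k - (d + 1)) * (2 * (d + 1) * (d + 1) * (d + 1))) by ring.
  assert (0 <= d * d * d + 4 * d * d + 5 * d + 2 + x * x * d) by nra.
  repeat apply Rplus_le_le_0_compat; repeat apply Rmult_le_pos; lra.
Qed.

Lemma idle_quadratic n r : 0 < r ->
  INR n <= idle n r * (idle n r + 2 + r * erlangB n r).
Proof.
  intros Hr. induction n as [| n IH].
  - rewrite idle_0. simpl. lra.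
  - rewrite idle_succ, erlangB_succ by exact Hr.
    pose proof (idle_nonneg n r Hr) as Hd. pose proof (idle_le n r Hr) as Hdn.
    pose proof (erlangB_pos n r Hr). pose proof (erlangB_le1 n r Hr).
    assert (Hr_eq : r = INR n + r * erlangB n r - idle n r)
      by (unfold idle, carried; ring).
    set (k := INR (S n)) in *. set (d := idle n r) in *. set (x := r * erlangB n r) in *.
    assert (Hk : k = INR n + 1) by apply S_INR.
    assert (Hx : 0 < x) by (unfold x; nra).
    pose proof (idle_quadratic_step k d x Hd Hx ltac:(lra) ltac:(lra)) as Hstep.
    replace (k - 1 + x - d) with r in Hstep by lra.
    apply Rminus_le.
    replace (k - k * (d + 1) / (k + x) * (k * (d + 1) / (k + x) + 2 + r * (x / (k + x))))
      with (- (k * ((d + 1) * (k * d + 3 * k + 2 * x + r * x) - (k + x) * (k + x))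
               / ((k + x) * (k + x)))) by (field; lra).
    assert (0 <= k * ((d + 1) * (k * d + 3 * k + 2 * x + r * x) - (k + x) * (k + x))
                  / ((k + x) * (k + x))) by (apply Rdiv_le_0_compat; nra).
    lra.
Qed.

Lemma carried_ge n r : 0 < r -> INR n * r / (INR n + r) <= carried n r.
Proof.
  intros Hr. pose proof (pos_INR n).
  assert (HB : erlangB n r * (INR n + r) <= r).
  { destruct n as [| n].
    - rewrite erlangB_0. simpl. lra.
    - rewrite erlangB_succ by exact Hr.
      pose proof (erlangB_pos n r Hr). pose proof (erlangB_le1 n r Hr).
      assert (0 <= r * INR (S n) * (1 - erlangB n r)) by (apply Rmult_le_pos; nra).
      rewrite <- Rmult_div_swap. apply Rle_div_l; nra. }
  apply Rle_div_l; [lra |]. unfold carried. nra.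
Qed.

Lemma derivable_pt_lim_erlang_term n r : r <> 0 ->
  derivable_pt_lim (erlang_term n) r (INR n / r * erlang_term n r).
Proof.
  intros Hr. pose proof (INR_fact_lt_0 n). unfold erlang_term.
  eapply derivable_pt_lim_eq_deriv.
  - apply (derivable_pt_lim_mult (fun y => y ^ n) (fun _ => / INR (fact n))).
    + apply derivable_pt_lim_pow.
    + apply derivable_pt_lim_const.
  - destruct n as [| n].
    + simpl. field. exact Hr.
    + simpl pred. simpl pow. field. lra.
Qed.

Lemma derivable_pt_lim_erlang_sum n r :
  derivable_pt_lim (erlang_sum n) r (erlang_sum n r - erlang_term n r).
Proof.
  induction n as [| n IH].
  - unfold erlang_sum, erlang_term. simpl.
    eapply derivable_pt_lim_eq_deriv; [apply (derivable_pt_lim_const (1 / 1)) | lra].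
  - eapply derivable_pt_lim_eq_deriv.
    + apply (derivable_pt_lim_plus (erlang_sum n) (erlang_term (S n))); [exact IH |].
      apply (derivable_pt_lim_mult (fun y => y ^ S n) (fun _ => / INR (fact (S n)))).
      * apply derivable_pt_lim_pow.
      * apply derivable_pt_lim_const.
    + rewrite erlang_sum_succ. unfold erlang_term. simpl pred.
      rewrite fact_simpl, mult_INR.
      pose proof (INR_fact_lt_0 n). pose proof (lt_0_INR (S n) (Nat.lt_0_succ n)).
      field. lra.
Qed.

Lemma derivable_pt_lim_erlangB n r : 0 < r ->
  derivable_pt_lim (erlangB n) r (erlangB n r * (INR n / r - 1 + erlangB n r)).
Proof.
  intros Hr. pose proof (erlang_sum_ge1 n r Hr). unfold erlangB.
  eapply derivable_pt_lim_eq_deriv.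
  - apply derivable_pt_lim_div;
      [apply derivable_pt_lim_erlang_term | apply derivable_pt_lim_erlang_sum |]; lra.
  - unfold Rsqr. field. lra.
Qed.

Lemma derivable_pt_lim_carried n r : 0 < r ->
  derivable_pt_lim (carried n) r (carried_slope n r).
Proof.
  intros Hr. unfold carried, carried_slope, idle, carried.
  eapply derivable_pt_lim_eq_deriv.
  - apply (derivable_pt_lim_mult id (fun y => 1 - erlangB n y)).
    + apply derivable_pt_lim_id.
    + apply (derivable_pt_lim_minus (fct_cte 1) (erlangB n)).
      * apply derivable_pt_lim_const.
      * apply derivable_pt_lim_erlangB. exact Hr.
  - unfold id. field. lra.
Qed.

Lemma derivable_pt_lim_carried_slope n r : 0 < r ->
  derivable_pt_lim (carried_slope n) r
    (- erlangB n r / r * (idle n r * (idle n r + 2 + r * erlangB n r) - INR n)).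
Proof.
  intros Hr. unfold carried_slope, idle, carried.
  eapply derivable_pt_lim_eq_deriv.
  - apply (derivable_pt_lim_minus (fun y => 1 - erlangB n y)
             (fun y => erlangB n y * (INR n - y * (1 - erlangB n y)))).
    + apply (derivable_pt_lim_minus (fct_cte 1) (erlangB n)).
      * apply derivable_pt_lim_const.
      * apply derivable_pt_lim_erlangB. exact Hr.
    + apply (derivable_pt_lim_mult (erlangB n) (fun y => INR n - y * (1 - erlangB n y))).
      * apply derivable_pt_lim_erlangB. exact Hr.
      * apply (derivable_pt_lim_minus (fct_cte (INR n)) (fun y => y * (1 - erlangB n y))).
        -- apply derivable_pt_lim_const.
        -- apply (derivable_pt_lim_carried n r Hr).
  - unfold carried_slope, idle, carried. field. lra.
Qed.

Lemma carried_slope_nonincreasing n x y : 0 < x <= y ->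
  carried_slope n y <= carried_slope n x.
Proof.
  apply (nonincreasing_of_deriv_nonpos _
           (fun r => - erlangB n r / r * (idle n r * (idle n r + 2 + r * erlangB n r) - INR n)) 0).
  - apply derivable_pt_lim_carried_slope.
  - intros r Hr. pose proof (erlangB_pos n r Hr). pose proof (idle_quadratic n r Hr).
    assert (0 < erlangB n r / r) by (apply Rdiv_lt_0_compat; lra).
    replace (- erlangB n r / r) with (- (erlangB n r / r)) by (field; lra).
    nra.
Qed.

Lemma carried_concave n x y t : 0 < x -> 0 < y -> 0 <= t <= 1 ->
  t * carried n x + (1 - t) * carried n y <= carried n (t * x + (1 - t) * y).
Proof.
  apply (concave_of_deriv_nonincreasing _ (carried_slope n) 0).
  - apply derivable_pt_lim_carried.
  - apply carried_slope_nonincreasing.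
Qed.

Lemma carried_slope_pos n r : (0 < n)%nat -> 0 < r -> 0 < carried_slope n r.
Proof.
  intros Hn Hr. destruct (Rlt_le_dec 0 (carried_slope n r)) as [| Hslope]; [assumption | exfalso].
  (* past r, carried would stay below carried n r < n, but it tends to n *)
  pose proof (idle_pos n r Hn Hr) as Hc. unfold idle in Hc.
  pose proof (erlangB_le1 n r Hr).
  set (K := INR n) in *. set (c := carried n r) in *.
  assert (HK : 0 < K) by (apply lt_0_INR; exact Hn).
  assert (Hc0 : 0 <= c) by (unfold c, carried; apply Rmult_le_pos; lra).
  set (z := c * K / (K - c) + r + 1).
  assert (Hz : r < z).
  { assert (0 <= c * K / (K - c)); [| unfold z; lra].
    apply Rdiv_le_0_compat; [apply Rmult_le_pos |]; lra. }
  pose proof (chord_bounds_of_deriv_nonincreasing (carried n) (carried_slope n) 0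
                (derivable_pt_lim_carried n) (carried_slope_nonincreasing n) r z
                ltac:(lra)) as [_ Hchord].
  assert (Hcz : carried n z <= c) by (fold c in Hchord; nra).
  pose proof (carried_ge n z ltac:(lra)) as Hge. fold K in Hge.
  rewrite Rle_div_l in Hge by lra.
  assert (z * (K - c) = c * K + (r + 1) * (K - c)) by (unfold z; field; lra).
  nra.
Qed.

Lemma carried_increasing n x y : (0 < n)%nat -> 0 < x < y -> carried n x < carried n y.
Proof.
  intros Hn. apply (strictly_increasing_of_deriv_pos _ (carried_slope n) 0).
  - apply derivable_pt_lim_carried.
  - intros r Hr. apply carried_slope_pos; assumption.
Qed.

Lemma carried_surjective n v : (0 < n)%nat -> 0 < v < INR n ->
  exists r, 0 < r /\ carried n r = v.
Proof.
  intros Hn Hv. set (K := INR n) in *.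
  set (lo := v / 2). set (hi := v * K / (K - v) + 1).
  assert (Hlo : 0 < lo) by (unfold lo; lra).
  assert (Hhi : lo < hi).
  { assert (v < v * K / (K - v)) by (apply Rlt_div_r; nra). unfold lo, hi. lra. }
  assert (Hclo : carried n lo - v < 0).
  { pose proof (erlangB_pos n lo Hlo).
    assert (carried n lo < lo) by (unfold carried; nra).
    unfold lo in *. lra. }
  assert (Hchi : 0 < carried n hi - v).
  { pose proof (carried_ge n hi ltac:(lra)) as Hge. fold K in Hge.
    enough (v < K * hi / (K + hi)) by lra.
    apply Rlt_div_r; [lra |].
    assert (hi * (K - v) = v * K + (K - v)) by (unfold hi; field; lra).
    nra. }
  destruct (Ranalysis5.IVT_interv (fun r => carried n r - v) lo hi) as [r [Hr Hroot]];
    [| exact Hhi | exact Hclo | exact Hchi |].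
  - intros r Hr. apply continuity_pt_minus; [| apply continuity_pt_const; intros ? ?; reflexivity].
    apply derivable_continuous_pt. exists (carried_slope n r).
    apply derivable_pt_lim_carried. lra.
  - exists r. split; lra.
Qed.

Lemma sum_weighted_erlang_term c r n :
  sum_f_R0 (fun j => (INR j - c) * erlang_term j r) n
  = r * (erlang_sum n r - erlang_term n r) - c * erlang_sum n r.
Proof.
  induction n as [| n IH].
  - unfold erlang_sum, erlang_term. simpl. field.
  - rewrite tech5, IH, erlang_sum_succ, erlang_term_succ.
    pose proof (lt_0_INR (S n) (Nat.lt_0_succ n)). field. lra.
Qed.

Lemma inv_powerRZ_pred mu j : 0 < mu -> / powerRZ mu (Z.of_nat j - 1) = mu / mu ^ j.
Proof.
  intros Hmu. replace (Z.of_nat j - 1)%Z with (Z.of_nat j + (-1))%Z by lia.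
  rewrite powerRZ_add by lra. rewrite <- pow_powerRZ. simpl.
  pose proof (pow_lt mu j Hmu). field. lra.
Qed.

Lemma Fpoly_carried k mu y u : 0 < mu -> 0 < y ->
  Fpoly k mu y u = mu * erlang_sum k (y / mu) * (carried k (y / mu) - u * INR k).
Proof.
  intros Hmu Hy. unfold Fpoly.
  rewrite (sum_eq _ (fun j => (INR j - u * INR k) * erlang_term j (y / mu) * mu)).
  - rewrite <- scal_sum, sum_weighted_erlang_term.
    unfold carried, erlangB.
    pose proof (erlang_sum_ge1 k (y / mu) ltac:(apply Rdiv_lt_0_compat; lra)).
    field. lra.
  - intros j _. rewrite inv_powerRZ_pred by exact Hmu. unfold erlang_term, Rdiv.
    rewrite Rpow_mult_distr, pow_inv.
    pose proof (pow_lt mu j Hmu). pose proof (INR_fact_lt_0 j). field. lra.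
Qed.

Lemma froot_carried k mu u : (0 < k)%nat -> 0 < mu -> 0 < u < 1 ->
  0 < froot k mu u /\ carried k (froot k mu u / mu) = u * INR k.
Proof.
  intros Hk Hmu Hu. pose proof (lt_0_INR k Hk).
  assert (Hex : exists y, 0 < y /\ Fpoly k mu y u = 0).
  { destruct (carried_surjective k (u * INR k) Hk ltac:(nra)) as [r [Hr Hcr]].
    exists (mu * r). split; [nra |].
    rewrite Fpoly_carried by nra.
    replace (mu * r / mu) with r by (field; lra).
    rewrite Hcr. ring. }
  destruct (epsilon_spec (inhabits 0) _ Hex) as [Hy HF]. fold (froot k mu u) in Hy, HF.
  split; [exact Hy |].
  rewrite Fpoly_carried in HF by assumption.
  pose proof (erlang_sum_ge1 k (froot k mu u / mu) ltac:(apply Rdiv_lt_0_compat; lra)).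
  apply Rmult_integral in HF as [HF | HF]; [apply Rmult_integral in HF as [HF | HF] |]; lra.
Qed.

Lemma froot_convex k mu u1 u2 t : (0 < k)%nat -> 0 < mu ->
  0 < u1 < 1 -> 0 < u2 < 1 -> 0 <= t <= 1 ->
  froot k mu (t * u1 + (1 - t) * u2) <= t * froot k mu u1 + (1 - t) * froot k mu u2.
Proof.
  intros Hk Hmu Hu1 Hu2 Ht.
  pose proof (convex_comb_between 0 1 u1 u2 t Hu1 Hu2 Ht) as Hu.
  destruct (froot_carried k mu u1 Hk Hmu Hu1) as [Hy1 Hc1].
  destruct (froot_carried k mu u2 Hk Hmu Hu2) as [Hy2 Hc2].
  destruct (froot_carried k mu _ Hk Hmu Hu) as [Hy Hc].
  set (r1 := froot k mu u1 / mu) in *. set (r2 := froot k mu u2 / mu) in *.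
  set (r := froot k mu (t * u1 + (1 - t) * u2) / mu) in *.
  assert (Hr1 : 0 < r1) by (apply Rdiv_lt_0_compat; lra).
  assert (Hr2 : 0 < r2) by (apply Rdiv_lt_0_compat; lra).
  (* the inverse of the concave increasing function carried k is convex *)
  assert (Hr : r <= t * r1 + (1 - t) * r2).
  { apply Rnot_lt_le. intros Hlt.
    pose proof (carried_concave k r1 r2 t Hr1 Hr2 Ht) as Hconc.
    pose proof (carried_increasing k (t * r1 + (1 - t) * r2) r Hk ltac:(nra)).
    rewrite Hc1, Hc2 in Hconc. lra. }
  unfold r, r1, r2 in Hr. unfold Rdiv in Hr.
  apply (Rmult_le_reg_r (/ mu)); [apply Rinv_0_lt_compat; lra |].
  rewrite Rmult_plus_distr_r, !Rmult_assoc. exact Hr.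
Qed.

Lemma pik_erlangB k r : pik k r = erlangB k r.
Proof. unfold pik, pi0, erlangB, erlang_sum, erlang_term, Rdiv. ring. Qed.

Lemma grej_froot k mu alpha p : (0 < k)%nat -> 0 < mu -> Pdom alpha p ->
  grej k mu alpha p = froot k mu (Udem alpha p) - mu * INR k * Udem alpha p.
Proof.
  intros Hk Hmu Hp.
  destruct (froot_carried k mu _ Hk Hmu Hp) as [_ Hc].
  unfold grej. rewrite pik_erlangB.
  set (y := froot k mu (Udem alpha p)) in *.
  replace (mu * INR k * Udem alpha p) with (mu * (Udem alpha p * INR k)) by ring.
  rewrite <- Hc. unfold carried. field. lra.
Qed.

Lemma Udem_convex_comb alpha x y t :
  Udem alpha (t * x + (1 - t) * y) = t * Udem alpha x + (1 - t) * Udem alpha y.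
Proof. unfold Udem. ring. Qed.

Lemma Pdom_convex alpha : convex_set (Pdom alpha).
Proof.
  intros x y t Hx Hy Ht. unfold Pdom. rewrite Udem_convex_comb.
  apply convex_comb_between; assumption.
Qed.

Lemma grej_convex k mu alpha : (0 < k)%nat -> 0 < mu ->
  convex_on (Pdom alpha) (grej k mu alpha).
Proof.
  intros Hk Hmu x y t Hx Hy Ht.
  pose proof (Pdom_convex alpha x y t Hx Hy Ht) as Hxy.
  rewrite !grej_froot by assumption. rewrite Udem_convex_comb.
  pose proof (froot_convex k mu _ _ t Hk Hmu Hx Hy Ht). lra.
Qed.

Theorem theorem1 (m : nat) (k : nat -> nat) (mu alpha xbar : nat -> R)
  (hk : forall i, (i < m)%nat -> (0 < k i)%nat)
  (hmu : forall i, (i < m)%nat -> 0 < mu i)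
  (halpha : forall i, (i < m)%nat -> alpha i <> 0) :
  (* objective U(p) = (U_i(p_i))_i is affine in p on P_1 x ... x P_m *)
  (forall (p q : nat -> R) (t : R),
     (forall i, (i < m)%nat -> Pdom (alpha i) (p i)) ->
     (forall i, (i < m)%nat -> Pdom (alpha i) (q i)) ->
     forall i, (i < m)%nat ->
       Udem (alpha i) (t * p i + (1 - t) * q i)
       = t * Udem (alpha i) (p i) + (1 - t) * Udem (alpha i) (q i)) /\
  (* each domain P_i is convex and each constraint g_i(p_i) <= xbar_i has g_i convex on P_i *)
  (forall i, (i < m)%nat ->
     convex_set (Pdom (alpha i)) /\
     convex_on (Pdom (alpha i)) (grej (k i) (mu i) (alpha i))).
Proof.
  split.
  - intros p q t _ _ i _. apply Udem_convex_comb.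
  - intros i Hi. split.
    + apply Pdom_convex.
    + apply grej_convex; auto.
Qed.
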